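(* In the setting below, let $y^\star,y'\in\mathcal{Y}$ be distinct with $p_{\mathrm{ref}}(y^\star)>0$ and $p_{\mathrm{ref}}(y')>0$. Then: (i) if $\alpha_{\mathrm{KL}}>0$, the point mass $\delta_{y^\star}$ is not a stationary point of $\mathcal{J}$ on $\mathcal{F}$; (ii) if $\alpha_{\mathrm{KL}}=0$ and $$r(y^\star)-r(y')<\alpha_{\mathrm{div}}\big(1-c(y^\star,y')\big),$$ then $\delta_{y^\star}$ is not a local maximizer of $\mathcal{J}$ on $\mathcal{F}$.
   Context: Let $\mathcal{Y}$ be a finite set of sequences, $p_{\mathrm{ref}}$ a probability distribution on $\mathcal{Y}$, $r:\mathcal{Y}\to\mathbb{R}$ a reward, $\psi:\mathcal{Y}\to\mathbb{S}^{d-1}$ a unit-norm embedding, $c(y,y')=\langle\psi(y),\psi(y')\rangle$ (cosine similarity), and $\alpha_{\mathrm{KL}}\ge0$, $\alpha_{\mathrm{div}}\ge 0$. The feasible set is $\mathcal{F}=\{p\in\Delta(\mathcal{Y}): p\ll p_{\mathrm{ref}}\}$ and the objective is $$\mathcal{J}[p]=\mathbb{E}_{y\sim p}[r(y)]-\alpha_{\mathrm{KL}}\,\mathrm{KL}(p\,\|\,p_{\mathrm{ref}})-\frac{\alpha_{\mathrm{div}}}{2}\,\mathbb{E}_{(y,y')\sim p\otimes p}[c(y,y')],$$ with $\mathrm{KL}(p\|q)=\sum_y p(y)\log\frac{p(y)}{q(y)}$ and pair expectations over two independent draws from $p$. $\delta_y$ denotes the point mass at $y$. *)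

From mathcomp Require Import all_boot all_order all_algebra.
From mathcomp Require Import all_classical all_reals all_analysis.
Set Implicit Arguments. Unset Strict Implicit. Unset Printing Implicit Defensive.
Import Order.TTheory GRing.Theory Num.Theory.
Local Open Scope ring_scope.

Section Defs.
Variables (R : realType) (Y : finType).

Definition is_distr (p : Y -> R) : Prop :=
  (forall y, 0 <= p y) /\ \sum_(y : Y) p y = 1.

Definition feasible (pref p : Y -> R) : Prop :=
  is_distr p /\ (forall y, pref y = 0 -> p y = 0).

Definition KL (p q : Y -> R) : R :=
  \sum_(y : Y) (if p y == 0 then 0 else p y * ln (p y / q y)).

Definition cossim (d : nat) (psi : Y -> 'I_d -> R) (y y' : Y) : R :=
  \sum_(i < d) psi y i * psi y' i.

Definition unit_norm (d : nat) (psi : Y -> 'I_d -> R) : Prop :=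
  forall y, \sum_(i < d) psi y i ^+ 2 = 1.

Definition objJ (pref r : Y -> R) (d : nat) (psi : Y -> 'I_d -> R)
  (aKL adiv : R) (p : Y -> R) : R :=
  \sum_(y : Y) p y * r y - aKL * KL p pref
  - adiv / 2 * \sum_(y : Y) \sum_(y' : Y) p y * p y' * cossim psi y y'.

Definition dirac_pt (y0 : Y) : Y -> R := fun y => if y == y0 then 1 else 0.

(* p is a stationary point of J on F: for every feasible q, the one-sided
   directional derivative of J at p in the feasible direction q - p exists
   (as a real number) and is <= 0 (first-order condition for maximization). *)
Definition stationary (J : (Y -> R) -> R) (F : (Y -> R) -> Prop) (p : Y -> R)
  : Prop :=
  F p /\
  forall q, F q -> exists l : R, l <= 0 /\
    forall e : R, 0 < e -> exists del : R, 0 < del /\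
      forall t : R, 0 < t -> t < del ->
        `| (J (fun y => p y + t * (q y - p y)) - J p) / t - l | < e.

(* p is a local maximizer of J on F (sup-norm neighbourhoods; all norms on
   R^Y are equivalent) *)
Definition local_max (J : (Y -> R) -> R) (F : (Y -> R) -> Prop) (p : Y -> R)
  : Prop :=
  F p /\ exists eps : R, 0 < eps /\
    forall q, F q -> (forall y, `| q y - p y | < eps) -> J q <= J p.

End Defs.

(* Move a small mass t from y0 = ystar to y1 = y'.
   The entropy term - a_KL t ln t makes the difference quotient blow up to
   +oo as t -> 0+, so no finite one-sided derivative exists when a_KL > 0.
   When a_KL = 0 the gain is t (a_div (1-c) - (r y0 - r y1) - t a_div (1-c)),
   which is positive for small t under the stated gap condition. *)
From mathcomp Require Import all_boot all_order all_algebra.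
From mathcomp Require Import all_classical all_reals all_analysis.
From mathcomp Require Import ring lra.
Import Order.TTheory GRing.Theory Num.Theory.
Set Implicit Arguments. Unset Strict Implicit.
Local Open Scope ring_scope.

Lemma sum_supported_pair (R : realType) (Y : finType) (f : Y -> R) (a b : Y) :
  a != b -> (forall y, y != a -> y != b -> f y = 0) ->
  \sum_(y : Y) f y = f a + f b.
Proof.
move=> ab f0; rewrite (bigD1 a) //= (bigD1 b) /=; last by rewrite eq_sym.
by rewrite big1 ?addr0 ?addrA // => y /andP[ya yb]; exact: f0.
Qed.

Section Cossim.
Variables (R : realType) (Y : finType) (d : nat) (psi : Y -> 'I_d -> R).

Lemma cossimC a b : cossim psi a b = cossim psi b a.
Proof. by apply: eq_bigr => i _; rewrite mulrC. Qed.

Hypothesis psi1 : unit_norm psi.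

Lemma cossim_diag a : cossim psi a a = 1.
Proof. by rewrite -(psi1 a); apply: eq_bigr => i _; rewrite expr2. Qed.

Lemma cossim_le1 a b : cossim psi a b <= 1.
Proof.
have sq : \sum_(i < d) (psi a i - psi b i) ^+ 2 =
    \sum_(i < d) psi a i ^+ 2 + \sum_(i < d) psi b i ^+ 2 - 2 * cossim psi a b.
  rewrite /cossim mulr_sumr -big_split -sumrB /=.
  by apply: eq_bigr => i _; ring.
have : 0 <= \sum_(i < d) (psi a i - psi b i) ^+ 2.
  by apply: sumr_ge0 => i _; exact: sqr_ge0.
by rewrite sq !psi1; lra.
Qed.

End Cossim.

Lemma KLE (R : realType) (Y : finType) (p q : Y -> R) :
  KL p q = \sum_(y : Y) p y * ln (p y / q y).
Proof. by apply: eq_bigr => y _; case: eqP => [->|]; rewrite ?mul0r. Qed.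

Lemma objJ_supported_pair (R : realType) (Y : finType) (pref r : Y -> R)
    (d : nat) (psi : Y -> 'I_d -> R) (aKL adiv : R) (a b : Y) (p : Y -> R) :
  unit_norm psi -> a != b -> (forall y, y != a -> y != b -> p y = 0) ->
  objJ pref r psi aKL adiv p =
    p a * r a + p b * r b
    - aKL * (p a * ln (p a / pref a) + p b * ln (p b / pref b))
    - adiv / 2 * (p a ^+ 2 + 2 * p a * p b * cossim psi a b + p b ^+ 2).
Proof.
move=> psi1 ab p0.
rewrite /objJ KLE !(sum_supported_pair ab) ?(cossimC psi b a) ?(cossim_diag psi1);
  first by ring.
all: move=> y ya yb; rewrite (p0 _ ya yb) ?(mul0r, mulr0) //.
by rewrite big1 // => z _; rewrite !mul0r.
Qed.

Lemma feasible_dirac (R : realType) (Y : finType) (pref : Y -> R) (y : Y) :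
  0 < pref y -> feasible pref (dirac_pt R y).
Proof.
move=> py; split; [split|].
- by move=> z; rewrite /dirac_pt; case: ifP.
- by rewrite (bigD1 y) //= /dirac_pt eqxx big1 ?addr0 // => z /negbTE ->.
- by move=> z; rewrite /dirac_pt; case: eqP => [->|] //; lra.
Qed.

Section Segment.
Variables (R : realType) (Y : finType) (y0 y1 : Y).
Hypothesis y01 : y0 != y1.

Definition dirac_segment (t : R) : Y -> R := fun y =>
  dirac_pt R y0 y + t * (dirac_pt R y1 y - dirac_pt R y0 y).

Lemma dirac_segment_y0 t : dirac_segment t y0 = 1 - t.
Proof. by rewrite /dirac_segment /dirac_pt eqxx (negbTE y01); lra. Qed.

Lemma dirac_segment_y1 t : dirac_segment t y1 = t.
Proof. by rewrite /dirac_segment /dirac_pt eqxx eq_sym (negbTE y01); lra. Qed.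

Lemma dirac_segment_out t y : y != y0 -> y != y1 -> dirac_segment t y = 0.
Proof. by move=> h0 h1; rewrite /dirac_segment /dirac_pt !ifN //; lra. Qed.

Lemma dirac_out y : y != y0 -> y != y1 -> dirac_pt R y0 y = 0.
Proof. by move=> h0 _; rewrite /dirac_pt ifN. Qed.

Lemma dist_dirac_segment t y :
  0 <= t -> `|dirac_segment t y - dirac_pt R y0 y| <= t.
Proof.
move=> t0; rewrite /dirac_segment addrC addKr normrM ger0_norm //.
rewrite -[leRHS]mulr1 ler_wpM2l //.
by rewrite /dirac_pt; do 2 case: (_ == _); rewrite ?subrr ?subr0 ?sub0r ?normrN ?normr1 ?normr0.
Qed.

Lemma feasible_dirac_segment (pref : Y -> R) t :
  0 <= t <= 1 -> 0 < pref y0 -> 0 < pref y1 -> feasible pref (dirac_segment t).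
Proof.
move=> /andP[t0 t1] p0 p1; split; [split|].
- move=> y; have [->|h0] := eqVneq y y0; first by rewrite dirac_segment_y0; lra.
  have [->|h1] := eqVneq y y1; first by rewrite dirac_segment_y1.
  by rewrite dirac_segment_out.
- rewrite (sum_supported_pair y01) ?dirac_segment_y0 ?dirac_segment_y1; first lra.
  exact: dirac_segment_out.
- move=> y; have [->|h0] := eqVneq y y0; first lra.
  have [->|h1] := eqVneq y y1; first lra.
  by rewrite dirac_segment_out.
Qed.

Variables (pref r : Y -> R) (d : nat) (psi : Y -> 'I_d -> R) (aKL adiv : R).
Hypotheses (psi1 : unit_norm psi) (pref0 : 0 < pref y0) (pref1 : 0 < pref y1).

Let J := objJ pref r psi aKL adiv.
Let c := cossim psi y0 y1.

Lemma objJ_dirac_segment_gain t : 0 < t < 1 ->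
  J (dirac_segment t) - J (dirac_pt R y0) =
    t * (r y1 - r y0)
    - aKL * ((1 - t) * ln (1 - t) + t * (ln (pref y0) - ln (pref y1)) + t * ln t)
    + adiv * t * (1 - t) * (1 - c).
Proof.
move=> /andP[t0 t1].
rewrite /J (objJ_supported_pair _ _ _ _ psi1 y01 (@dirac_segment_out t)).
rewrite (objJ_supported_pair _ _ _ _ psi1 y01 dirac_out).
rewrite dirac_segment_y0 dirac_segment_y1 /dirac_pt eqxx eq_sym (negbTE y01).
have t1' : 0 < 1 - t by lra.
rewrite !(mul0r, mul1r, add0r, addr0) !lnM ?posrE ?invr_gt0 // !lnV ?posrE // -/c.
by field.
Qed.

Hypotheses (aKL0 : 0 <= aKL) (adiv0 : 0 <= adiv).

Lemma objJ_dirac_segment_gain_ge t : 0 < t < 1 ->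
  t * ((r y1 - r y0) - aKL * (ln (pref y0) - ln (pref y1)) - aKL * ln t)
    <= J (dirac_segment t) - J (dirac_pt R y0).
Proof.
move=> t01; rewrite objJ_dirac_segment_gain //; case/andP: t01 => t0 t1.
have lnt1 : aKL * ((1 - t) * ln (1 - t)) <= 0.
  by rewrite mulr_ge0_le0 ?mulr_ge0_le0 ?ln_le0 //; lra.
have c1 : 0 <= adiv * t * (1 - t) * (1 - c).
  by rewrite !mulr_ge0 //; move: (cossim_le1 psi1 y0 y1); rewrite -/c; lra.
lra.
Qed.

Lemma objJ_dirac_segment_improves eps : aKL = 0 -> 0 < eps ->
  r y0 - r y1 < adiv * (1 - c) ->
  exists t, [/\ 0 < t, t < 1, t < eps & J (dirac_pt R y0) < J (dirac_segment t)].
Proof.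
move=> aKL00 eps0 gap; set A := adiv * (1 - c); set g := A - (r y0 - r y1).
have A0 : 0 <= A by rewrite mulr_ge0 // subr_ge0 cossim_le1.
have g0 : 0 < g by rewrite /g /A; lra.
set t := Num.min (1 / 2) (Num.min (eps / 2) (g / (A + 1))).
have t0 : 0 < t by rewrite !lt_min; apply/and3P; split; [lra|lra|apply: divr_gt0; lra].
have tA : t * (A + 1) <= g by rewrite -ler_pdivlMr ?ltr_wpDl // !ge_min lexx !orbT.
exists t; split => //.
- by rewrite gt_min; apply/orP; left; lra.
- by rewrite !gt_min; apply/orP; right; apply/orP; left; lra.
have t01 : 0 < t < 1 by rewrite t0 /= gt_min; apply/orP; left; lra.
rewrite -subr_gt0 objJ_dirac_segment_gain // aKL00 mul0r subr0.
have -> : t * (r y1 - r y0) + adiv * t * (1 - t) * (1 - c) = t * (g - t * A).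
  by rewrite /g /A; ring.
by rewrite mulr_gt0 // subr_gt0; lra.
Qed.

End Segment.

Lemma no_right_limit_of_log_blowup (R : realType) (g : R -> R) (K a l : R) :
  0 < a -> (forall t, 0 < t < 1 -> K - a * ln t <= g t) ->
  ~ (forall e : R, 0 < e -> exists del : R, 0 < del /\
       forall t : R, 0 < t -> t < del -> `|g t - l| < e).
Proof.
move=> a0 gK lim; have [del [del0 near_l]] := lim 1 ltr01.
(* Below exp (- M) the lower bound already exceeds l + 1. *)
set M := (`|l| + 1 + `|K|) / a.
set t := Num.min (del / 2) (Num.min (1 / 2) (expR (- M))).
have t0 : 0 < t by rewrite !lt_min; apply/and3P; split; [lra|lra|exact: expR_gt0].
have tdel : t < del by rewrite gt_min; apply/orP; left; lra.
have t1 : t < 1 by rewrite !gt_min; apply/orP; right; apply/orP; left; lra.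
have lnt : ln t <= - M.
  by rewrite -(expRK (- M)) ler_ln ?posrE ?expR_gt0 // !ge_min lexx !orbT.
have aM : a * M = `|l| + 1 + `|K| by rewrite /M mulrCA divff ?mulr1 ?gt_eqF.
have : K + a * M <= g t.
  apply: le_trans (gK t _); last by rewrite t0 t1.
  by rewrite lerD2l -mulrN; apply: ler_wpM2l; [exact: ltW | lra].
have := near_l t t0 tdel; rewrite aM.
have := ler_norm (g t - l); have := ler_norm l; have := ler_norm (- K); rewrite normrN; lra.
Qed.

Theorem mainTheorem5 (R : realType) (Y : finType) (pref r : Y -> R)
  (d : nat) (psi : Y -> 'I_d -> R) (aKL adiv : R) (ystar y' : Y) :
  is_distr pref -> unit_norm psi -> 0 <= aKL -> 0 <= adiv ->
  ystar != y' -> 0 < pref ystar -> 0 < pref y' ->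
  (0 < aKL ->
     ~ stationary (objJ pref r psi aKL adiv) (feasible pref) (@dirac_pt R Y ystar))
  /\
  (aKL = 0 ->
     r ystar - r y' < adiv * (1 - cossim psi ystar y') ->
     ~ local_max (objJ pref r psi aKL adiv) (feasible pref) (@dirac_pt R Y ystar)).
Proof.
move=> _ psi1 aKL0 adiv0 ne p0 p1; split.
- move=> aKLp [_ stat].
  have [l [_ lim]] := stat _ (feasible_dirac p1).
  apply: (no_right_limit_of_log_blowup aKLp _ lim) => t t01.
  have [t0 _] := andP t01.
  rewrite ler_pdivlMr // mulrC.
  exact: (objJ_dirac_segment_gain_ge ne r psi1 p0 p1 aKL0 adiv0 t01).
- move=> aKL00 gap [_ [eps [eps0 locmax]]].
  have [t [t0 t1 teps better]] :=
    objJ_dirac_segment_improves ne psi1 p0 p1 adiv0 aKL00 eps0 gap.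
  move: better; rewrite ltNge => /negP; apply; apply: locmax.
    by apply: feasible_dirac_segment; rewrite ?ltW.
  by move=> y; exact: le_lt_trans (dist_dirac_segment _ _ _ (ltW t0)) teps.
Qed.
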